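(* For any positive integer $k$, in $\mathfrak{h}^1_t[[u]]$, $$S_t\left(\frac{1}{1-z_ku}\right)\ast\frac{1}{1+z_ku}=\frac{1}{1-\sum_{i=2}^\infty t^{i-2}(t-1)z_{ik}u^i}.$$
   Context: $t,u$ are commuting variables. $\mathfrak{h}_t=\mathbb{Q}[t]\langle x,y\rangle$ ($1$ = empty word), $\mathfrak{h}^1_t=\mathbb{Q}[t]+\mathfrak{h}_ty$, $z_k=x^{k-1}y$. For $X$ without constant term, $\frac{1}{1-X}=\sum_{n\ge0}X^n$ with concatenation powers; in particular $\frac1{1\mp z_ku}=\sum_n(\pm1)^nz_k^nu^n$. $\sigma_t$ is the algebra automorphism with $\sigma_t(x)=x,\sigma_t(y)=tx+y$ and $S_t$ is the $\mathbb{Q}[t]$-linear map with $S_t(1)=1$, $S_t(wa)=\sigma_t(w)a$ for words $w$ and letters $a$. The harmonic product $\ast$ on $\mathfrak{h}^1_t$ is the $\mathbb{Q}[t]$-bilinear product with $1\ast w=w\ast1=w$ and $z_kw_1\ast z_lw_2=z_k(w_1\ast z_lw_2)+z_l(z_kw_1\ast w_2)+z_{k+l}(w_1\ast w_2)$ for words $w_1,w_2\in\mathfrak{h}^1_t$. Everything extends coefficientwise to power series in $u$. *)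

From HB Require Import structures.
From mathcomp Require Import all_boot all_order all_algebra.
Set Implicit Arguments. Unset Strict Implicit. Unset Printing Implicit Defensive.
Import GRing.Theory.
Local Open Scope ring_scope.

(* Words in the letters x (= false) and y (= true); 1 = empty word. *)
Definition word := seq bool.

(* Coefficient ring Q[t]; t is the polynomial variable 'X. *)
Definition Qt := {poly rat}.

(* Elements of h_t = Q[t]<x,y> are represented as formal finite Q[t]-linear
   combinations of words (lists of (coefficient, word)); two representatives
   denote the same element iff they have the same coefficient function [nc_coef]. *)
Definition nc := seq (Qt * word).

Definition nc_coef (f : nc) (v : word) : Qt :=
  \sum_(p <- f) (if p.2 == v then p.1 else 0).

Definition nc_zero : nc := [::].
Definition nc_one : nc := [:: (1, [::])].
Definition nc_add (f g : nc) : nc := f ++ g.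
Definition nc_scale (c : Qt) (f : nc) : nc := [seq (c * p.1, p.2) | p <- f].
Definition nc_mul (f g : nc) : nc :=
  [seq (p.1 * q.1, p.2 ++ q.2) | p <- f, q <- g].
Definition nc_word (w : word) : nc := [:: (1, w)].

(* z_k = x^(k-1) y *)
Definition zw (k : nat) : word := rcons (nseq k.-1 false) true.
Definition z (k : nat) : nc := nc_word (zw k).

(* sigma_t : algebra automorphism, x |-> x, y |-> t x + y *)
Definition sigma_letter (a : bool) : nc :=
  if a then [:: ('X, [:: false]); (1, [:: true])] else nc_word [:: false].
Definition sigma_word (w : word) : nc :=
  foldr (fun a acc => nc_mul (sigma_letter a) acc) nc_one w.
(* S_t(1) = 1, S_t(w a) = sigma_t(w) a *)
Definition St_word (w : word) : nc :=
  match rev w with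
  | [::] => nc_one
  | a :: rw => nc_mul (sigma_word (rev rw)) (nc_word [:: a])
  end.
Definition St (f : nc) : nc := flatten [seq nc_scale p.1 (St_word p.2) | p <- f].

(* Harmonic product of words of h^1 (empty or ending in y), as the multiset of
   resulting words; n is fuel (size w1 + size w2 + 1 suffices). Writing
   w1 = z_k w1' (k = i+1, i = index of the first y) and w2 = z_l w2' (l = j+1):
   z_k w1' * z_l w2' = z_k (w1' * z_l w2') + z_l (z_k w1' * w2') + z_(k+l) (w1' * w2'). *)
Fixpoint stuffle (n : nat) (w1 w2 : word) {struct n} : seq word :=
  match n with
  | 0 => [::]
  | n'.+1 =>
    match w1, w2 with
    | [::], _ => [:: w2]
    | _, [::] => [:: w1]
    | _, _ =>
      let i := index true w1 in
      let j := index true w2 in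
      [seq take i.+1 w1 ++ v | v <- stuffle n' (drop i.+1 w1) w2]
      ++ [seq take j.+1 w2 ++ v | v <- stuffle n' w1 (drop j.+1 w2)]
      ++ [seq zw (i + j + 2) ++ v | v <- stuffle n' (drop i.+1 w1) (drop j.+1 w2)]
    end
  end.

Definition harm_word (w1 w2 : word) : seq word :=
  stuffle (size w1 + size w2).+1 w1 w2.

(* Q[t]-bilinear extension of the harmonic product (meaningful on h^1_t) *)
Definition harm (f g : nc) : nc :=
  flatten [seq [seq (p.1 * q.1, v) | v <- harm_word p.2 q.2] | p <- f, q <- g].

(* Power series in u with coefficients in h_t: F m = coefficient of u^m. *)
Definition ser := nat -> nc.

Definition ser_one : ser := fun m => if m == 0%N then nc_one else nc_zero.
Definition ser_prod (op : nc -> nc -> nc) (F G : ser) : ser :=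
  fun m => flatten [seq op (F i) (G (m - i)%N) | i <- iota 0 m.+1].
Definition ser_mul := ser_prod nc_mul.
Definition ser_harm := ser_prod harm.
Definition ser_pow (F : ser) (n : nat) : ser := iter n (ser_mul F) ser_one.
(* 1/(1-F) = sum_n F^n (concatenation powers), for F without constant term:
   only n <= m contributes to the coefficient of u^m. *)
Definition ser_geom (F : ser) : ser :=
  fun m => flatten [seq ser_pow F n m | n <- iota 0 m.+1].
Definition ser_St (F : ser) : ser := fun m => St (F m).

Definition ser_eq (F G : ser) : Prop :=
  forall (m : nat) (v : word), nc_coef (F m) v = nc_coef (G m) v.

(** Both sides lie in h^1_t[[u]] and have constant term 1, and 1/(1 - C) is the only
    such series X with X = 1 + C X: reading off the coefficient of a word z_a w, this
    equation determines the coefficients of X word by word. So it suffices to check that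
    the left-hand side L satisfies it for C = sum_(i >= 2) t^(i-2) (t - 1) z_(ik) u^i.

    A leading letter z_a of a word in a harmonic product comes from the first factor,
    from the second one, or from merging a z_b of the first with a z_(a-b) of the
    second. In S_t(z_k^i) a leading z_a occurs only for a = pk, in front of
    t^(p-1) S_t(z_k^(i-p)) (p blocks z_k merge, each merge turning a y into t x), and in
    (-z_k)^j only for a = k, in front of -(-z_k)^(j-1). Summing over i + j = m, a
    leading z_(pk) in L thus carries t^(p-1) - t^(p-2) = t^(p-2) (t - 1) for p >= 2,
    while for p = 1 the two contributions 1 and -1 cancel. *)

From mathcomp Require Import all_boot all_order all_algebra zify.
Import GRing.Theory.
Local Open Scope ring_scope.
Set Implicit Arguments. Unset Strict Implicit. Unset Printing Implicit Defensive.

(** * Formal linear combinations of words *)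

Definition nc_eq (f g : nc) := forall v, nc_coef f v = nc_coef g v.

Definition nc_sum (H : word -> Qt) (f : nc) : Qt := \sum_(p <- f) p.1 * H p.2.

Lemma nc_sum_nil H : nc_sum H [::] = 0.
Proof. exact: big_nil. Qed.

Lemma nc_sum_cons H p f : nc_sum H (p :: f) = p.1 * H p.2 + nc_sum H f.
Proof. exact: big_cons. Qed.

Lemma nc_sum_cat H f g : nc_sum H (f ++ g) = nc_sum H f + nc_sum H g.
Proof. exact: big_cat. Qed.

Lemma nc_sum_flatten H (s : seq nc) :
  nc_sum H (flatten s) = \sum_(f <- s) nc_sum H f.
Proof.
elim: s => [|f s IH]; first by rewrite big_nil nc_sum_nil.
by rewrite /= nc_sum_cat IH big_cons.
Qed.

Lemma nc_sum_scale H c f : nc_sum H (nc_scale c f) = c * nc_sum H f.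
Proof. by rewrite /nc_sum big_map mulr_sumr; apply: eq_bigr => p _; rewrite mulrA. Qed.

Lemma nc_sum_word H w : nc_sum H (nc_word w) = H w.
Proof. by rewrite nc_sum_cons nc_sum_nil mul1r addr0. Qed.

Lemma nc_sumC (H : word -> word -> Qt) f g :
  nc_sum (fun u => nc_sum (H u) g) f = nc_sum (fun w => nc_sum (H^~ w) f) g.
Proof.
rewrite /nc_sum; under eq_bigr do rewrite mulr_sumr.
rewrite exchange_big; apply: eq_bigr => q _; rewrite mulr_sumr.
by apply: eq_bigr => p _; rewrite mulrCA.
Qed.

Lemma nc_sumD H1 H2 f : nc_sum (fun w => H1 w + H2 w) f = nc_sum H1 f + nc_sum H2 f.
Proof. by rewrite /nc_sum -big_split; apply: eq_bigr => p _; rewrite mulrDr. Qed.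

Lemma nc_sum_big (r : seq nat) (H : nat -> word -> Qt) f :
  nc_sum (fun w => \sum_(i <- r) H i w) f = \sum_(i <- r) nc_sum (H i) f.
Proof. by rewrite /nc_sum exchange_big; apply: eq_bigr => p _; rewrite mulr_sumr. Qed.

Lemma eq_nc_sum H H' f : H =1 H' -> nc_sum H f = nc_sum H' f.
Proof. by move=> HH'; apply: eq_bigr => p _; rewrite HH'. Qed.

Lemma nc_sum0 f : nc_sum (fun=> 0) f = 0.
Proof. by rewrite /nc_sum big1 // => p _; rewrite mulr0. Qed.

Lemma nc_coefE f v : nc_coef f v = nc_sum (fun w => (w == v)%:R) f.
Proof. by apply: eq_bigr => p _; case: eqP; rewrite ?mulr1 ?mulr0. Qed.

Lemma big_pick_uniq (s : seq word) x (F : word -> Qt) : uniq s -> x \in s ->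
  \sum_(w <- s) (if x == w then F w else 0) = F x.
Proof.
move=> us xs; rewrite (big_rem x xs) /= eqxx big1_seq ?addr0 // => w /andP[_ wr].
by case: eqP => // exw; rewrite -exw mem_rem_uniqF in wr.
Qed.

Lemma nc_sum_support H f (s : seq word) : uniq s -> {subset map snd f <= s} ->
  nc_sum H f = \sum_(w <- s) nc_coef f w * H w.
Proof.
move=> us fs; under [RHS]eq_bigr do rewrite nc_coefE /nc_sum mulr_suml.
rewrite exchange_big; apply: eq_big_seq => p pf.
under eq_bigr do rewrite mulrAC mulr_natr mulrb.
by rewrite (big_pick_uniq (fun w => p.1 * H w)) // fs // map_f.
Qed.

Lemma nc_sum_eq H f g : nc_eq f g -> nc_sum H f = nc_sum H g.
Proof.
move=> fg; pose s := undup (map snd f ++ map snd g).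
rewrite !(@nc_sum_support H _ s) ?undup_uniq //.
- by apply: eq_bigr => w _; rewrite fg.
- by move=> w wg; rewrite mem_undup mem_cat wg orbT.
- by move=> w wf; rewrite mem_undup mem_cat wf.
Qed.

Lemma nc_coef_nil v : nc_coef [::] v = 0.
Proof. exact: big_nil. Qed.

Lemma nc_coef_flatten (s : seq nc) v : nc_coef (flatten s) v = \sum_(f <- s) nc_coef f v.
Proof. by rewrite nc_coefE nc_sum_flatten; under eq_bigr do rewrite -nc_coefE. Qed.

Lemma nc_coef_scale c f v : nc_coef (nc_scale c f) v = c * nc_coef f v.
Proof. by rewrite !nc_coefE nc_sum_scale. Qed.

Lemma nc_coef_word u v : nc_coef (nc_word u) v = (u == v)%:R.
Proof. by rewrite nc_coefE nc_sum_word. Qed.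

Lemma nc_sum_mul H f g :
  nc_sum H (nc_mul f g) = nc_sum (fun u => nc_sum (fun w => H (u ++ w)) g) f.
Proof.
rewrite /nc_sum big_allpairs_dep; apply: eq_bigr => p _.
by rewrite mulr_sumr; apply: eq_bigr => q _; rewrite mulrA.
Qed.

Lemma nc_coef_mul f g v :
  nc_coef (nc_mul f g) v = nc_sum (fun u => nc_sum (fun w => (u ++ w == v)%:R) g) f.
Proof. by rewrite nc_coefE nc_sum_mul. Qed.

Lemma nc_mul_eqr f g g' : nc_eq g g' -> nc_eq (nc_mul f g) (nc_mul f g').
Proof.
move=> gg' v; rewrite !nc_coef_mul !(nc_sumC (fun u w => (u ++ w == v)%:R)).
exact: nc_sum_eq.
Qed.

Lemma nc_coef_mul_prefix f g u v :
    (forall p, p \in f -> forall x, (p.2 ++ x == u ++ v) = (p.2 == u) && (x == v)) ->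
  nc_coef (nc_mul f g) (u ++ v) = nc_coef f u * nc_coef g v.
Proof.
move=> fu; rewrite nc_coef_mul nc_coefE /nc_sum mulr_suml; apply: eq_big_seq => p pf.
rewrite -mulrA nc_coefE -nc_sum_scale /nc_sum big_map; congr (_ * _); apply: eq_bigr => q _ /=.
by rewrite fu //; case: (p.2 == u); case: (q.2 == v); rewrite ?mulr0 ?mul0r ?mulr1 ?mul1r.
Qed.

Lemma nc_coef_mul_nil f g : (forall p, p \in f -> p.2 != [::]) -> nc_coef (nc_mul f g) [::] = 0.
Proof.
move=> fne; rewrite nc_coef_mul -(nc_sum0 f); apply: eq_big_seq => p pf; congr (_ * _).
by rewrite -(nc_sum0 g); apply: eq_nc_sum => w; move: (fne p pf); case: p.2.
Qed.

Lemma nc_coef_mulA f g h v :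
  nc_coef (nc_mul (nc_mul f g) h) v = nc_coef (nc_mul f (nc_mul g h)) v.
Proof.
rewrite !nc_coefE !nc_sum_mul; apply: eq_nc_sum => u1; rewrite nc_sum_mul.
by apply: eq_nc_sum => u2; apply: eq_nc_sum => w; rewrite catA.
Qed.

(** * Words *)

Lemma zw_cat n w : zw n ++ w = nseq n.-1 false ++ true :: w.
Proof. by rewrite /zw cat_rcons. Qed.

Lemma size_zw n : (0 < n)%N -> size (zw n) = n.
Proof. by case: n => // n _; rewrite /zw size_rcons size_nseq. Qed.

Lemma zw_cat_nil n w : (zw n ++ w == [::]) = false.
Proof. by rewrite zw_cat; case: (nseq _ _). Qed.

Lemma index_zw_cat n w : index true (zw n ++ w) = n.-1.
Proof. by rewrite zw_cat; elim: n.-1 => //= m ->. Qed.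

(* [zw 0] and [zw 1] are both the word y, hence the positivity hypotheses. *)
Lemma eq_zw_cat a b v w : (0 < a)%N -> (0 < b)%N ->
  (zw a ++ v == zw b ++ w) = (a == b) && (v == w).
Proof.
move=> a0 b0; have [<-|ne] := eqVneq a b; first by rewrite eqseq_cat // eqxx.
apply/eqP => /(congr1 (index true)); rewrite !index_zw_cat => /eqP.
by rewrite -(prednK a0) -(prednK b0) in ne; rewrite -eqSS (negPf ne).
Qed.

Lemma eq_zw a b : (0 < a)%N -> (0 < b)%N -> (zw a == zw b) = (a == b).
Proof. by move=> a0 b0; have := eq_zw_cat [::] [::] a0 b0; rewrite !cats0 eqxx andbT. Qed.

Lemma split_at_y w : true \in w ->
  w = zw (index true w).+1 ++ drop (index true w).+1 w.
Proof. by elim: w => // [[]] w IH /=; rewrite ?drop0 // inE => /IH {1}->. Qed.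

Lemma take_at_y w : true \in w -> take (index true w).+1 w = zw (index true w).+1.
Proof. by move=> yw; rewrite {2}(split_at_y yw) take_size_cat ?size_zw. Qed.

Definition zprefix (a : nat) (w : word) := take a w == zw a.

Lemma zprefix_zw_cat a b w : (0 < a)%N -> (0 < b)%N -> zprefix a (zw b ++ w) = (a == b).
Proof.
move=> a0 b0; rewrite /zprefix; have [->|ne] := eqVneq a b.
  by rewrite take_size_cat ?size_zw ?eqxx.
apply/eqP => e; have := cat_take_drop a (zw b ++ w); rewrite e => /eqP.
by rewrite eq_zw_cat // (negPf ne).
Qed.

Lemma zprefix_nil a : (0 < a)%N -> zprefix a [::] = false.
Proof. by case: a => // a _; rewrite /zprefix /zw; case: a. Qed.

Lemma eq_zw_catr a w v : (0 < a)%N -> (w == zw a ++ v) = zprefix a w && (drop a w == v).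
Proof.
move=> a0; apply/eqP/andP => [->|[/eqP p /eqP d]].
  by rewrite /zprefix take_size_cat ?drop_size_cat ?size_zw.
by rewrite -(cat_take_drop a w) p d.
Qed.

(* The words of h^1: the empty word and the words ending in y. *)
Definition h1_word (w : word) := last true w.

Lemma h1_word_cat u w : h1_word u -> h1_word w -> h1_word (u ++ w).
Proof. by rewrite /h1_word last_cat => ->. Qed.

Lemma h1_word_zw n : h1_word (zw n).
Proof. by rewrite /h1_word /zw last_rcons. Qed.

Lemma h1_word_has_y w : h1_word w -> w != [::] -> true \in w.
Proof. by case: w => // a w; rewrite /h1_word /= => h _; rewrite -h mem_last. Qed.

Lemma h1_word_drop n w : h1_word w -> h1_word (drop n w).
Proof. by elim: w n => [|a w IH] [|n] //= h; apply: IH; case: w h. Qed.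

Lemma size_drop_lt (w : word) n : w != [::] -> (size (drop n.+1 w) < size w)%N.
Proof. by case: w => // a w _; rewrite size_drop /=; lia. Qed.

Lemma word_ind (P : word -> Prop) : P [::] ->
    (forall a w, (0 < a)%N -> P w -> P (zw a ++ w)) ->
    (forall w, ~~ h1_word w -> P w) ->
  forall w, P w.
Proof.
move=> P0 Pzw Pbad w; elim: {w}(size w) {-2}w (leqnn (size w)) => [|n IH] w sw.
  by case: w sw.
have [->|w0] := eqVneq w [::]; first by [].
have [h1w|] := boolP (h1_word w); last exact: Pbad.
rewrite (split_at_y (h1_word_has_y h1w w0)); apply: Pzw => //; apply: IH.
by rewrite -ltnS (leq_trans (size_drop_lt _ w0)).
Qed.

Definition nc_h1 (f : nc) := all (fun p => h1_word p.2) f.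

Lemma nc_sum_eq_h1 H H' f : nc_h1 f -> {in h1_word, H =1 H'} -> nc_sum H f = nc_sum H' f.
Proof. by move=> /allP hf HH'; apply: eq_big_seq => p /hf h; rewrite HH'. Qed.

Lemma nc_coef_h1 f v : nc_h1 f -> ~~ h1_word v -> nc_coef f v = 0.
Proof.
move=> /allP hf hv; rewrite /nc_coef big1_seq // => p /andP[_ /hf].
by case: eqP => // ->; rewrite (negPf hv).
Qed.

Lemma nc_h1_cat f g : nc_h1 f -> nc_h1 g -> nc_h1 (f ++ g).
Proof. by rewrite /nc_h1 all_cat => -> ->. Qed.

Lemma nc_h1_flatten (s : seq nc) : all nc_h1 s -> nc_h1 (flatten s).
Proof. by elim: s => //= f s IH /andP[hf hs]; rewrite nc_h1_cat ?IH. Qed.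

Lemma nc_h1_scale c f : nc_h1 f -> nc_h1 (nc_scale c f).
Proof. by rewrite /nc_h1 all_map. Qed.

Lemma nc_h1_mul f g : nc_h1 f -> nc_h1 g -> nc_h1 (nc_mul f g).
Proof.
move=> /allP hf /allP hg; apply/allP => _ /allpairsP[[p q] [pf qg ->]].
exact: h1_word_cat (hf _ pf) (hg _ qg).
Qed.

(** * The harmonic product *)

Lemma stuffle_cons n w1 w2 : w1 != [::] -> w2 != [::] -> stuffle n.+1 w1 w2 =
     [seq take (index true w1).+1 w1 ++ v | v <- stuffle n (drop (index true w1).+1 w1) w2]
  ++ [seq take (index true w2).+1 w2 ++ v | v <- stuffle n w1 (drop (index true w2).+1 w2)]
  ++ [seq zw (index true w1 + index true w2 + 2) ++ v
       | v <- stuffle n (drop (index true w1).+1 w1) (drop (index true w2).+1 w2)].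
Proof. by case: w1 => // ? ?; case: w2. Qed.

Lemma stuffle_fuel n m w1 w2 : (size w1 + size w2 < n)%N -> (size w1 + size w2 < m)%N ->
  stuffle n w1 w2 = stuffle m w1 w2.
Proof.
elim: n m w1 w2 => [|n IH] [|m] w1 w2 // ln lm.
have [->|w10] := eqVneq w1 [::]; first by [].
have [->|w20] := eqVneq w2 [::]; first by case: w1 w10 {ln lm}.
have s1 : (0 < size w1)%N by rewrite lt0n size_eq0.
have s2 : (0 < size w2)%N by rewrite lt0n size_eq0.
by rewrite !stuffle_cons // !(IH m) // !size_drop; lia.
Qed.

Lemma stuffle_harm_word n w1 w2 : (size w1 + size w2 < n)%N ->
  stuffle n w1 w2 = harm_word w1 w2.
Proof. by move=> ln; apply: stuffle_fuel. Qed.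

Lemma harm_word_zw (w1 w2 : word) : true \in w1 -> true \in w2 ->
  harm_word w1 w2 =
       [seq zw (index true w1).+1 ++ v | v <- harm_word (drop (index true w1).+1 w1) w2]
    ++ [seq zw (index true w2).+1 ++ v | v <- harm_word w1 (drop (index true w2).+1 w2)]
    ++ [seq zw ((index true w1).+1 + (index true w2).+1) ++ v
         | v <- harm_word (drop (index true w1).+1 w1) (drop (index true w2).+1 w2)].
Proof.
move=> y1 y2; have w10 : w1 != [::] by case: (w1) y1.
have w20 : w2 != [::] by case: (w2) y2.
have s1 : (0 < size w1)%N by rewrite lt0n size_eq0.
have s2 : (0 < size w2)%N by rewrite lt0n size_eq0.
rewrite {1}/harm_word stuffle_cons // !take_at_y // addn2 addSn addnS.
by rewrite !stuffle_harm_word // !size_drop; lia.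
Qed.

Lemma all_h1_stuffle n w1 w2 : h1_word w1 -> h1_word w2 -> all h1_word (stuffle n w1 w2).
Proof.
elim: n w1 w2 => [|n IH] w1 w2 h1 h2 //.
have [->|w10] := eqVneq w1 [::]; first by rewrite /= h2.
have [e2|w20] := eqVneq w2 [::]; first by rewrite e2; case: (w1) w10 h1 => //= ? ? _ ->.
have y1 := h1_word_has_y h1 w10; have y2 := h1_word_has_y h2 w20.
rewrite stuffle_cons // !all_cat !all_map !take_at_y //.
apply/and3P; split; apply/allP => v vs; rewrite /preim /= h1_word_cat ?h1_word_zw //.
- exact: (allP (IH _ _ (h1_word_drop _ h1) h2) _ vs).
- exact: (allP (IH _ _ h1 (h1_word_drop _ h2)) _ vs).
- exact: (allP (IH _ _ (h1_word_drop _ h1) (h1_word_drop _ h2)) _ vs).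
Qed.

Lemma all_h1_harm_word w1 w2 : h1_word w1 -> h1_word w2 -> all h1_word (harm_word w1 w2).
Proof. exact: all_h1_stuffle. Qed.

Lemma count_nil_harm_word w1 w2 :
  count_mem [::] (harm_word w1 w2) = (w1 == [::]) && (w2 == [::]).
Proof.
case: w1 => [|a1 w1]; first by case: w2.
case: w2 => [|a2 w2]; first by [].
rewrite /harm_word stuffle_cons // !count_cat !count_map.
by rewrite !(@eq_count _ _ pred0) ?count_pred0 // => v; rewrite /preim /= ?zw_cat_nil.
Qed.

Lemma count_zw_map a b v (s : seq word) : (0 < a)%N -> (0 < b)%N ->
  count_mem (zw a ++ v) [seq zw b ++ u | u <- s] = if a == b then count_mem v s else 0%N.
Proof.
move=> a0 b0; rewrite count_map; case: eqP => [<-|/eqP ab].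
  by apply: eq_count => u; rewrite /preim /= eq_zw_cat // eqxx.
rewrite (@eq_count _ _ pred0) ?count_pred0 // => u.
by rewrite /preim /= eq_zw_cat // eq_sym (negPf ab).
Qed.

Definition harm_coef (v w1 w2 : word) : Qt := (count_mem v (harm_word w1 w2))%:R.

Lemma harm_coef_nill v w : harm_coef v [::] w = (w == v)%:R.
Proof. by rewrite /harm_coef /= addn0. Qed.

Lemma harm_coef_nilr v w : harm_coef v w [::] = (w == v)%:R.
Proof. by case: w => [|a w]; rewrite /harm_coef /= addn0. Qed.

Lemma harm_coef_nil w1 w2 : harm_coef [::] w1 w2 = ((w1 == [::]) && (w2 == [::]))%:R.
Proof. by rewrite /harm_coef count_nil_harm_word. Qed.

Lemma sum_subn_eq a c (F : nat -> Qt) : (0 < c)%N ->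
  \sum_(1 <= b < a) (if (a - b == c)%N then F b else 0) = if (c < a)%N then F (a - c)%N else 0.
Proof.
move=> c0; rewrite (@eq_big_nat _ _ _ 1 a _ (fun b => if b == (a - c)%N then F b else 0)).
  by rewrite -big_mkcond big_nat1_eq; case: ifP; case: ifP => //; lia.
move=> b /andP[b1 ba]; have [eb|ne] := eqVneq b (a - c)%N.
  by rewrite eb; have -> : (a - (a - c) == c)%N by apply/eqP; lia.
by have -> : (a - b == c)%N = false by apply/negbTE/eqP; move: ne => /eqP; lia.
Qed.

Lemma harm_coef_zw a v w1 w2 : (0 < a)%N -> h1_word w1 -> h1_word w2 ->
  harm_coef (zw a ++ v) w1 w2 =
      (if zprefix a w1 then harm_coef v (drop a w1) w2 else 0)
    + (if zprefix a w2 then harm_coef v w1 (drop a w2) else 0)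
    + \sum_(1 <= b < a) (if zprefix b w1 && zprefix (a - b) w2
                         then harm_coef v (drop b w1) (drop (a - b) w2) else 0).
Proof.
move=> a0 h1 h2; have [->|w10] := eqVneq w1 [::].
  rewrite zprefix_nil // add0r big1_seq ?addr0 => [|b /andP[_]]; last first.
    by rewrite mem_index_iota => /andP[b1 _]; rewrite zprefix_nil.
  by rewrite harm_coef_nill eq_zw_catr //; case: zprefix; rewrite ?harm_coef_nill.
have [->|w20] := eqVneq w2 [::].
  rewrite (zprefix_nil a0) addr0 big1_seq ?addr0 => [|b /andP[_]]; last first.
    by rewrite mem_index_iota => /andP[_ ba]; rewrite (@zprefix_nil (a - b)) ?andbF //; lia.
  by rewrite harm_coef_nilr eq_zw_catr //; case: zprefix; rewrite ?harm_coef_nilr.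
have y1 := h1_word_has_y h1 w10; have y2 := h1_word_has_y h2 w20.
set a1 := (index true w1).+1; set a2 := (index true w2).+1.
have pre1 b : (0 < b)%N -> zprefix b w1 = (b == a1).
  by move=> b0; rewrite [in LHS](split_at_y y1) zprefix_zw_cat.
have pre2 b : (0 < b)%N -> zprefix b w2 = (b == a2).
  by move=> b0; rewrite [in LHS](split_at_y y2) zprefix_zw_cat.
rewrite /harm_coef harm_word_zw // -/a1 -/a2 !count_cat !count_zw_map ?addn_gt0 //.
rewrite !natrD pre1 // pre2 // addrA; congr (_ + _ + _); try by case: eqP => [->|].
rewrite (@eq_big_nat _ _ _ 1 a _ (fun b => if (a - b == a2)%N then
  (if b == a1 then (count_mem v (harm_word (drop a1 w1) (drop a2 w2)))%:R else 0) else 0)).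
  rewrite sum_subn_eq //; have -> : (a - a2 == a1)%N = (a == a1 + a2)%N by apply/eqP/eqP; lia.
  by case: eqP => [->|_]; [rewrite ifT // -[X in (X < _)%N]add0n ltn_add2r | case: ifP].
move=> b /andP[b0 ba]; rewrite pre1 // pre2; last by lia.
by case: eqP => [->|]; case: eqP => [e|] //=; rewrite e.
Qed.

Lemma nc_coef_harm f g v :
  nc_coef (harm f g) v = nc_sum (fun u => nc_sum (harm_coef v u) g) f.
Proof.
have coef_const c (s : seq word) : nc_coef [seq (c, u) | u <- s] v = c * (count_mem v s)%:R.
  elim: s => [|u s IH]; first by rewrite nc_coef_nil mulr0.
  by rewrite /nc_coef big_cons -/(nc_coef _ v) IH /= natrD mulrDr; case: eqP; rewrite ?mulr1 ?mulr0.
rewrite nc_coef_flatten big_allpairs_dep /nc_sum; apply: eq_bigr => p _.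
by rewrite mulr_sumr; apply: eq_bigr => q _; rewrite coef_const mulrA.
Qed.

Lemma nc_h1_harm f g : nc_h1 f -> nc_h1 g -> nc_h1 (harm f g).
Proof.
move=> /allP hf /allP hg; apply: nc_h1_flatten; apply/allP => _ /allpairsP[[p q] [pf qg ->]].
by rewrite /nc_h1 all_map; apply: sub_all (all_h1_harm_word (hf _ pf) (hg _ qg)).
Qed.

Lemma harm_eql f f' g : nc_eq f f' -> nc_eq (harm f g) (harm f' g).
Proof. by move=> ff' v; rewrite !nc_coef_harm (nc_sum_eq _ ff'). Qed.

Lemma harm_eqr f g g' : nc_eq g g' -> nc_eq (harm f g) (harm f g').
Proof. by move=> gg' v; rewrite !nc_coef_harm !(nc_sumC (harm_coef v)) (nc_sum_eq _ gg'). Qed.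

Lemma nc_coef_harm0l g v : nc_coef (harm nc_zero g) v = 0.
Proof. by rewrite nc_coef_harm nc_sum_nil. Qed.

Lemma nc_coef_harm_nil f g : nc_coef (harm f g) [::] = nc_coef f [::] * nc_coef g [::].
Proof.
rewrite nc_coef_harm !nc_coefE /nc_sum mulr_suml; apply: eq_bigr => p _.
rewrite -mulrA; congr (_ * _); rewrite mulr_sumr; apply: eq_bigr => q _.
by rewrite harm_coef_nil -mulnb natrM mulrCA.
Qed.

Lemma nc_coef_harm_scalel c f g v :
  nc_coef (harm (nc_scale c f) g) v = c * nc_coef (harm f g) v.
Proof. by rewrite !nc_coef_harm nc_sum_scale. Qed.

Lemma nc_coef_harm_scaler c f g v :
  nc_coef (harm f (nc_scale c g)) v = c * nc_coef (harm f g) v.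
Proof. by rewrite !nc_coef_harm !(nc_sumC (harm_coef v)) nc_sum_scale. Qed.

Definition zquot (a : nat) (f : nc) : nc :=
  [seq (p.1, drop a p.2) | p <- f & zprefix a p.2].

Lemma nc_sum_zquot H a f :
  nc_sum H (zquot a f) = nc_sum (fun u => if zprefix a u then H (drop a u) else 0) f.
Proof.
rewrite /nc_sum big_map big_filter big_mkcond; apply: eq_bigr => p _.
by case: ifP; rewrite ?mulr0.
Qed.

Lemma nc_coef_zquot a f w : (0 < a)%N -> nc_coef (zquot a f) w = nc_coef f (zw a ++ w).
Proof.
move=> a0; rewrite !nc_coefE nc_sum_zquot; apply: eq_nc_sum => u.
by rewrite eq_zw_catr //; case: zprefix.
Qed.

Lemma nc_coef_harm_zw a f g w : (0 < a)%N -> nc_h1 f -> nc_h1 g ->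
  nc_coef (harm f g) (zw a ++ w) =
      nc_coef (harm (zquot a f) g) w + nc_coef (harm f (zquot a g)) w
    + \sum_(1 <= b < a) nc_coef (harm (zquot b f) (zquot (a - b) g)) w.
Proof.
move=> a0 hf hg; rewrite !nc_coef_harm nc_sum_zquot.
rewrite (@nc_sum_eq_h1 _ (fun u => nc_sum (fun v =>
    (if zprefix a u then harm_coef w (drop a u) v else 0)
  + (if zprefix a v then harm_coef w u (drop a v) else 0)
  + \sum_(1 <= b < a) (if zprefix b u && zprefix (a - b) v
                       then harm_coef w (drop b u) (drop (a - b) v) else 0)) g) _ hf).
  under eq_nc_sum => u do rewrite !nc_sumD nc_sum_big.
  rewrite !nc_sumD nc_sum_big; congr (_ + _ + _).
  - by apply: eq_nc_sum => u; case: zprefix; rewrite ?nc_sum0.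
  - by apply: eq_nc_sum => u; rewrite nc_sum_zquot.
  apply: eq_bigr => b _; rewrite nc_coef_harm nc_sum_zquot.
  by apply: eq_nc_sum => u; rewrite nc_sum_zquot; case: zprefix; rewrite ?nc_sum0.
move=> u hu; apply: nc_sum_eq_h1 hg _ => v hv.
by rewrite harm_coef_zw.
Qed.

(** * Power series and geometric series *)

Definition antidiag (m : nat) (F : nat -> nat -> Qt) : Qt := \sum_(0 <= i < m.+1) F i (m - i)%N.

Lemma eq_antidiag m F G : (forall i j, F i j = G i j) -> antidiag m F = antidiag m G.
Proof. by move=> FG; apply: eq_bigr => i _; rewrite FG. Qed.

Lemma antidiagB m F G :
  antidiag m (fun i j => F i j - G i j) = antidiag m F - antidiag m G.
Proof. exact: sumrB. Qed.

Lemma antidiagZ c m F : antidiag m (fun i j => c * F i j) = c * antidiag m F.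
Proof. by rewrite /antidiag mulr_sumr. Qed.

Lemma antidiag_pick p m F :
  antidiag m (fun i j => if i == p then F i j else 0) = if (p <= m)%N then F p (m - p)%N else 0.
Proof. by rewrite /antidiag -big_mkcond big_nat1_eq ltnS. Qed.

Lemma antidiag_swap m F : antidiag m F = antidiag m (fun i j => F j i).
Proof.
rewrite /antidiag big_nat_rev; apply: eq_big_nat => i /andP[_ im].
by rewrite add0n subSS; congr F; lia.
Qed.

Lemma antidiag_shiftl p m F :
  antidiag m (fun i j => if (p <= i)%N then F (i - p)%N j else 0) =
  if (p <= m)%N then antidiag (m - p) F else 0.
Proof.
rewrite /antidiag; case: leqP => pm; last first.
  by rewrite big1_seq // => i /andP[_]; rewrite mem_index_iota => /andP[_ im]; rewrite ifN //; lia.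
rewrite (big_cat_nat _ (n := p)) //=; last by lia.
rewrite big1_seq ?add0r => [|i /andP[_]]; last first.
  by rewrite mem_index_iota => /andP[_ ip]; rewrite ifN //; lia.
rewrite -{1}[p]add0n big_addn; have -> : (m.+1 - p = (m - p).+1)%N by lia.
by apply: eq_bigr => i _; rewrite leq_addl addnK; congr F; lia.
Qed.

Lemma antidiag_shiftr q m F :
  antidiag m (fun i j => if (q <= j)%N then F i (j - q)%N else 0) =
  if (q <= m)%N then antidiag (m - q) F else 0.
Proof. by rewrite antidiag_swap (antidiag_shiftl q m (fun i j => F j i)) -antidiag_swap. Qed.

Lemma nc_coef_ser_prod op F G m v :
  nc_coef (ser_prod op F G m) v = antidiag m (fun i j => nc_coef (op (F i) (G j)) v).
Proof. by rewrite nc_coef_flatten big_map /antidiag /index_iota subn0. Qed.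

Lemma nc_coef_ser_one m v : nc_coef (ser_one m) v = ((m == 0)%N && (v == [::]))%:R.
Proof. by rewrite /ser_one; case: eqP => _; rewrite ?nc_coef_word ?nc_coef_nil // eq_sym. Qed.

Lemma nc_coef_ser_geom C m v :
  nc_coef (ser_geom C m) v = \sum_(0 <= n < m.+1) nc_coef (ser_pow C n m) v.
Proof. by rewrite nc_coef_flatten big_map /index_iota subn0. Qed.

Definition zletters (f : nc) := forall p, p \in f -> exists2 n, (0 < n)%N & p.2 = zw n.

Lemma nc_h1_zletters f : zletters f -> nc_h1 f.
Proof. by move=> fz; apply/allP => p /fz[n _ ->]; apply: h1_word_zw. Qed.

Lemma nc_coef_mul_zletters_nil f g : zletters f -> nc_coef (nc_mul f g) [::] = 0.
Proof. by move=> fz; apply: nc_coef_mul_nil => p /fz[n _ ->]; rewrite -[zw n]cats0 zw_cat_nil. Qed.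

Lemma nc_coef_mul_zletters f g a v : zletters f -> (0 < a)%N ->
  nc_coef (nc_mul f g) (zw a ++ v) = nc_coef f (zw a) * nc_coef g v.
Proof.
move=> fz a0; apply: nc_coef_mul_prefix => p /fz[n n0 ->] x.
by rewrite eq_zw_cat // eq_zw.
Qed.

Section GeometricSeries.
Variable C : ser.
Hypothesis C0 : C 0%N = nc_zero.
Hypothesis Cz : forall i, zletters (C i).

Lemma nc_coef_ser_powS n m v :
  nc_coef (ser_pow C n.+1 m) v = antidiag m (fun i j => nc_coef (nc_mul (C i) (ser_pow C n j)) v).
Proof. exact: nc_coef_ser_prod. Qed.

Lemma nc_coef_ser_pow_lt n m v : (m < n)%N -> nc_coef (ser_pow C n m) v = 0.
Proof.
elim: n m v => // n IH m v mn; rewrite nc_coef_ser_powS /antidiag big1_seq // => i.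
rewrite mem_index_iota => /andP[_ im]; case: i im => [|i] im.
  by rewrite C0 nc_coef_nil.
rewrite (nc_mul_eqr _ (g' := nc_zero)) => [|w]; last by rewrite IH ?nc_coef_nil //; lia.
by rewrite nc_coef_mul -(nc_sum0 (C i.+1)); apply: eq_nc_sum => u; apply: nc_sum_nil.
Qed.

Lemma nc_coef_ser_geom_sum N m v : (m < N)%N ->
  \sum_(0 <= n < N) nc_coef (ser_pow C n m) v = nc_coef (ser_geom C m) v.
Proof.
move=> mN; rewrite nc_coef_ser_geom (big_cat_nat _ (n := m.+1)) //= [X in _ + X]big1_seq ?addr0 //.
by move=> n /andP[_]; rewrite mem_index_iota => /andP[mn _]; apply: nc_coef_ser_pow_lt.
Qed.

Lemma nc_coef_ser_geom_nil m : nc_coef (ser_geom C m) [::] = (m == 0)%N%:R.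
Proof.
rewrite nc_coef_ser_geom big_nat_recl // nc_coef_ser_one eqxx andbT big1 ?addr0 // => n _.
by rewrite nc_coef_ser_powS /antidiag big1 // => i _; rewrite nc_coef_mul_zletters_nil.
Qed.

Lemma nc_coef_ser_geom_zw m a v : (0 < a)%N ->
  nc_coef (ser_geom C m) (zw a ++ v) =
  antidiag m (fun i j => nc_coef (C i) (zw a) * nc_coef (ser_geom C j) v).
Proof.
move=> a0; rewrite nc_coef_ser_geom big_nat_recl // nc_coef_ser_one zw_cat_nil andbF add0r.
under eq_bigr do rewrite nc_coef_ser_powS.
rewrite /antidiag exchange_big /=; apply: eq_big_nat => i /andP[_ im].
under eq_bigr do rewrite nc_coef_mul_zletters //.
rewrite -mulr_sumr; case: i im => [|i] im; first by rewrite C0 nc_coef_nil !mul0r.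
by rewrite nc_coef_ser_geom_sum //; lia.
Qed.

Lemma nc_h1_ser_pow n m : nc_h1 (ser_pow C n m).
Proof.
elim: n m => [|n IH] m; first by rewrite /= /ser_one; case: eqP.
apply: nc_h1_flatten; apply/allP => _ /mapP[i _ ->].
exact: nc_h1_mul (nc_h1_zletters (@Cz i)) (IH _).
Qed.

Lemma nc_h1_ser_geom m : nc_h1 (ser_geom C m).
Proof. by apply: nc_h1_flatten; apply/allP => _ /mapP[n _ ->]; apply: nc_h1_ser_pow. Qed.

(* The three hypotheses on [F] say that F lies in h^1[[u]] and that F = 1 + C F. *)
Lemma ser_geom_unique (F : ser) :
    (forall m, nc_h1 (F m)) ->
    (forall m, nc_coef (F m) [::] = (m == 0)%N%:R) ->
    (forall m a w, (0 < a)%N -> nc_coef (F m) (zw a ++ w) =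
       antidiag m (fun i j => nc_coef (C i) (zw a) * nc_coef (F j) w)) ->
  ser_eq F (ser_geom C).
Proof.
move=> Fh1 Fnil Fzw m v; elim/word_ind: v m => [|a w a0 IH|v hv] m.
- by rewrite Fnil nc_coef_ser_geom_nil.
- by rewrite Fzw // nc_coef_ser_geom_zw //; apply: eq_bigr => i _; rewrite IH.
- by rewrite !nc_coef_h1 // nc_h1_ser_geom.
Qed.

End GeometricSeries.

(** * The map S_t *)

Lemma nc_coef_St f v : nc_coef (St f) v = nc_sum (fun w => nc_coef (St_word w) v) f.
Proof.
rewrite nc_coef_flatten big_map; apply: eq_bigr => p _.
by rewrite nc_coef_scale.
Qed.

Lemma St_eq f g : nc_eq f g -> nc_eq (St f) (St g).
Proof. by move=> fg v; rewrite !nc_coef_St (nc_sum_eq _ fg). Qed.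

Lemma nc_h1_St_word w : h1_word w -> nc_h1 (St_word w).
Proof.
rewrite /St_word /h1_word; case/lastP: w => [|u a] //; rewrite rev_rcons last_rcons revK => ->.
by apply/allP => _ /allpairsP[[p q] [_ /[!inE]/eqP-> ->]]; rewrite /h1_word last_cat.
Qed.

Lemma nc_h1_St f : nc_h1 f -> nc_h1 (St f).
Proof.
move=> /allP hf; apply: nc_h1_flatten; apply/allP => _ /mapP[p /hf hp ->].
exact/nc_h1_scale/nc_h1_St_word.
Qed.

Definition sigma_letter_coef (a c : bool) : Qt :=
  if a then (if c then 1 else 'X) else (~~ c)%:R.

Lemma nc_coef_sigma_letter a c : nc_coef (sigma_letter a) [:: c] = sigma_letter_coef a c.
Proof.
case: a; case: c; rewrite /sigma_letter ?nc_coef_word //.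
all: by rewrite /nc_coef !big_cons big_nil /= ?addr0 ?add0r.
Qed.

Lemma nc_coef_sigma_letter_mul a c f v :
  nc_coef (nc_mul (sigma_letter a) f) (c :: v) = sigma_letter_coef a c * nc_coef f v.
Proof.
rewrite -nc_coef_sigma_letter -(@nc_coef_mul_prefix _ _ [:: c]) // => p.
by case: a; rewrite /sigma_letter !inE; [case/orP|]; move=> /eqP-> x; case: c.
Qed.

Lemma nc_coef_sigma_letter_mul_nil a f : nc_coef (nc_mul (sigma_letter a) f) [::] = 0.
Proof. by apply: nc_coef_mul_nil => p; case: a; rewrite !inE; [case/orP|]; move=> /eqP->. Qed.

(* The coefficient of [v] in S_t(w): sigma_t acts letterwise on all letters but the last. *)
Fixpoint St_coef (w v : word) : Qt :=
  match w, v with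
  | [::], [::] => 1
  | [:: a], [:: c] => (a == c)%:R
  | a :: (_ :: _) as w', c :: v' => sigma_letter_coef a c * St_coef w' v'
  | _, _ => 0
  end.

Lemma nc_coef_St_word w v : nc_coef (St_word w) v = St_coef w v.
Proof.
rewrite /St_word; case/lastP: w v => [|u a] v; first by rewrite nc_coef_word; case: v.
rewrite rev_rcons revK; elim: u v => [|b u IH] [|c v].
- by rewrite /nc_coef big_cons big_nil /= addr0.
- rewrite /nc_coef big_cons big_nil /= addr0 mulr1.
  by case: v => [|? ?]; case: a; case: c.
- by rewrite /= nc_coef_mulA nc_coef_sigma_letter_mul_nil; case: u {IH}.
- by rewrite /= nc_coef_mulA nc_coef_sigma_letter_mul IH; case: u {IH}.
Qed.

Lemma St_coef_cons a W c v : W != [::] ->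
  St_coef (a :: W) (c :: v) = sigma_letter_coef a c * St_coef W v.
Proof. by case: W. Qed.

Lemma St_coef_nil_l v : St_coef [::] v = (v == [::])%:R.
Proof. by case: v. Qed.

Lemma St_coef_nil_r w : w != [::] -> St_coef w [::] = 0.
Proof. by case: w => // a [|]. Qed.

Lemma St_coef_nseq n m W w :
  St_coef (nseq n false ++ true :: W) (nseq m false ++ true :: w) =
  if m == n then St_coef W w
  else if (n < m)%N then 'X * St_coef W (nseq (m - n).-1 false ++ true :: w) else 0.
Proof.
have nseqS_cat k u : nseq k.+1 false ++ u = false :: (nseq k false ++ u) by [].
elim: n m => [|n IH] [|m]; rewrite ?nseqS_cat.
- by case: W => [|d W]; [case: w | rewrite /= mul1r].
- by case: W => [|d W] //; case: m => [|m] /=; rewrite mulr0.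
- by rewrite St_coef_cons ?mul0r //; case: (nseq n false).
- by rewrite St_coef_cons ?mul1r ?IH //; case: (nseq n false).
Qed.

Lemma St_coef_zw_cat n a W w : (0 < n)%N -> (0 < a)%N ->
  St_coef (zw n ++ W) (zw a ++ w) =
  if a == n then St_coef W w else if (n < a)%N then 'X * St_coef W (zw (a - n) ++ w) else 0.
Proof.
move=> n0 a0; rewrite !zw_cat St_coef_nseq.
have -> : (a.-1 == n.-1) = (a == n) by apply/eqP/eqP; lia.
have -> : (n.-1 < a.-1)%N = (n < a)%N by lia.
by have -> : (a.-1 - n.-1).-1 = (a - n).-1 by lia.
Qed.

Section PowersOfZk.
Variable k : nat.
Hypothesis k0 : (0 < k)%N.

Definition zw_pow (i : nat) : word := flatten (nseq i (zw k)).

Lemma zw_powS i : zw_pow i.+1 = zw k ++ zw_pow i.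
Proof. by []. Qed.

Lemma h1_word_zw_pow i : h1_word (zw_pow i).
Proof. by elim: i => // i IH; rewrite zw_powS h1_word_cat ?h1_word_zw. Qed.

Lemma St_coef_zw_pow_mul i p w : (0 < p)%N ->
  St_coef (zw_pow i) (zw (p * k) ++ w) =
  if (p <= i)%N then 'X ^+ p.-1 * St_coef (zw_pow (i - p)) w else 0.
Proof.
elim: i p => [|i IH] p p0.
  by rewrite St_coef_nil_l zw_cat_nil; case: leqP => //; lia.
rewrite zw_powS St_coef_zw_cat ?muln_gt0 ?p0 //.
have [->|p1] := eqVneq p 1%N; first by rewrite mul1n eqxx expr0 mul1r subSS subn0.
have -> : (p * k == k) = false by apply/negbTE/eqP; nia.
have -> : (k < p * k)%N by nia.
have -> : (p * k - k = p.-1 * k)%N by rewrite -{2}[k]mul1n -mulnBl subn1.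
rewrite IH; last by lia.
have -> : (p.-1 <= i)%N = (p <= i.+1)%N by lia.
case: ifP => _; last by rewrite mulr0.
by rewrite mulrA -exprS; congr (_ ^+ _ * St_coef (zw_pow _) w); lia.
Qed.

Lemma St_coef_zw_pow_ndvd i a w : (0 < a)%N -> ~~ (k %| a)%N ->
  St_coef (zw_pow i) (zw a ++ w) = 0.
Proof.
elim: i a => [|i IH] a a0 ka; first by rewrite St_coef_nil_l zw_cat_nil.
rewrite zw_powS St_coef_zw_cat //.
have -> : (a == k) = false by apply: contraNF ka => /eqP->.
case: ltnP => // lt_ka; rewrite IH ?mulr0 //; first by lia.
by apply: contra ka; rewrite -{2}(subnK (ltnW lt_ka)) dvdn_addl.
Qed.

End PowersOfZk.

Lemma nc_coef_z n a : (0 < n)%N -> (0 < a)%N -> nc_coef (z n) (zw a) = (a == n)%:R.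
Proof. by move=> n0 a0; rewrite nc_coef_word eq_zw // eq_sym. Qed.

Lemma zletters_scale_z c n : (0 < n)%N -> zletters (nc_scale c (z n)).
Proof. by move=> n0 p /[!inE]/eqP->; exists n. Qed.

Section Proposition.
Variable k : nat.
Hypothesis k0 : (0 < k)%N.

Definition zk_ser : ser := fun i => if i == 1%N then z k else nc_zero.
Definition neg_zk_ser : ser := fun i => if i == 1%N then nc_scale (-1) (z k) else nc_zero.
Definition c_ser : ser := fun i =>
  if (2 <= i)%N then nc_scale ('X ^+ (i - 2) * ('X - 1)) (z (i * k)) else nc_zero.

Lemma zletters_zk_ser i : zletters (zk_ser i).
Proof. by rewrite /zk_ser; case: eqP => // _ p /[!inE]/eqP->; exists k. Qed.

Lemma zletters_neg_zk_ser i : zletters (neg_zk_ser i).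
Proof. by rewrite /neg_zk_ser; case: eqP => // _; apply: zletters_scale_z. Qed.

Lemma zletters_c_ser i : zletters (c_ser i).
Proof.
by rewrite /c_ser; case: ifP => // i2; apply: zletters_scale_z; rewrite muln_gt0 k0; lia.
Qed.

Lemma nc_coef_c_ser i a : (0 < a)%N -> nc_coef (c_ser i) (zw a) =
  if (2 <= i)%N && (a == i * k)%N then 'X ^+ (i - 2) * ('X - 1) else 0.
Proof.
move=> a0; rewrite /c_ser; case: ifP => i2; last by rewrite nc_coef_nil.
rewrite andTb nc_coef_scale nc_coef_z ?muln_gt0 ?k0 ?andbT //; last by lia.
by case: eqP; rewrite ?mulr1 ?mulr0.
Qed.

Lemma ser_geom_zk_ser : ser_eq (fun i => nc_word (zw_pow k i)) (ser_geom zk_ser).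
Proof.
apply: ser_geom_unique => //; first exact: zletters_zk_ser.
- by move=> m; rewrite /nc_h1 /= h1_word_zw_pow.
- by case=> [|m]; rewrite nc_coef_word // zw_powS zw_cat_nil.
move=> m a w a0; rewrite (@eq_antidiag _ _ (fun i j => if i == 1%N then
    (a == k)%:R * nc_coef (nc_word (zw_pow k j)) w else 0)); last first.
  by move=> i j; rewrite /zk_ser; case: eqP => _; rewrite ?nc_coef_z ?nc_coef_nil ?mul0r.
rewrite antidiag_pick nc_coef_word; case: m => [|m]; first by rewrite eq_sym zw_cat_nil.
by rewrite zw_powS eq_zw_cat // subn1 nc_coef_word -natrM mulnb eq_sym.
Qed.

Definition St_zk_pow i := St (ser_geom zk_ser i).
Definition neg_zk_pow j := ser_geom neg_zk_ser j.

Lemma nc_coef_St_zk_pow i v : nc_coef (St_zk_pow i) v = St_coef (zw_pow k i) v.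
Proof. by rewrite -(St_eq (ser_geom_zk_ser i)) nc_coef_St nc_sum_word nc_coef_St_word. Qed.

Lemma nc_h1_St_zk_pow i : nc_h1 (St_zk_pow i).
Proof. exact/nc_h1_St/nc_h1_ser_geom/zletters_zk_ser. Qed.

Lemma nc_h1_neg_zk_pow j : nc_h1 (neg_zk_pow j).
Proof. exact/nc_h1_ser_geom/zletters_neg_zk_ser. Qed.

Lemma zquot_St_zk_pow_mul i p : (0 < p)%N -> nc_eq (zquot (p * k) (St_zk_pow i))
  (nc_scale (if (p <= i)%N then 'X ^+ p.-1 else 0) (St_zk_pow (i - p))).
Proof.
move=> p0 w; rewrite nc_coef_zquot ?muln_gt0 ?p0 // nc_coef_scale !nc_coef_St_zk_pow.
by rewrite St_coef_zw_pow_mul //; case: ifP; rewrite ?mul0r.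
Qed.

Lemma zquot_St_zk_pow_ndvd i a : (0 < a)%N -> ~~ (k %| a)%N ->
  nc_eq (zquot a (St_zk_pow i)) nc_zero.
Proof.
by move=> a0 ka w; rewrite nc_coef_zquot // nc_coef_St_zk_pow St_coef_zw_pow_ndvd ?nc_coef_nil.
Qed.

Lemma zquot_neg_zk_pow a j : (0 < a)%N -> nc_eq (zquot a (neg_zk_pow j))
  (nc_scale (if (a == k) && (0 < j)%N then -1 else 0) (neg_zk_pow j.-1)).
Proof.
move=> a0 w; rewrite nc_coef_zquot // nc_coef_ser_geom_zw //; last exact: zletters_neg_zk_ser.
rewrite (@eq_antidiag _ _ (fun i l => if i == 1%N then
    - (a == k)%:R * nc_coef (neg_zk_pow l) w else 0)); last first.
  move=> i l; rewrite /neg_zk_ser; case: eqP => _; last by rewrite nc_coef_nil mul0r.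
  by rewrite nc_coef_scale nc_coef_z // mulN1r.
rewrite antidiag_pick nc_coef_scale subn1; case: j => [|j] /=; first by rewrite andbF mul0r.
by rewrite andbT; case: eqP; rewrite ?mulN1r ?oppr0 ?mul0r.
Qed.

Definition harm_pow_coef (w : word) (i j : nat) : Qt :=
  nc_coef (harm (St_zk_pow i) (neg_zk_pow j)) w.

Lemma harm_pow_coef_zk w i j p : (0 < p)%N ->
  harm_pow_coef (zw (p * k) ++ w) i j =
    'X ^+ p.-1 * (if (p <= i)%N then harm_pow_coef w (i - p) j else 0)
  - (p == 1)%:R * (if (1 <= j)%N then harm_pow_coef w i (j - 1) else 0)
  - (1 < p)%:R * 'X ^+ p.-2 *
      (if (1 <= j)%N then (if (p.-1 <= i)%N then harm_pow_coef w (i - p.-1) (j - 1) else 0)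
       else 0).
Proof.
move=> p0; have pk0 : (0 < p * k)%N by rewrite muln_gt0 p0.
rewrite /harm_pow_coef nc_coef_harm_zw ?nc_h1_St_zk_pow ?nc_h1_neg_zk_pow //.
rewrite (harm_eql _ (zquot_St_zk_pow_mul i p0)) (harm_eqr _ (zquot_neg_zk_pow j pk0)).
rewrite nc_coef_harm_scalel nc_coef_harm_scaler; congr (_ + _ + _).
- by case: ifP; rewrite ?mul0r ?mulr0.
- have -> : (p * k == k) = (p == 1%N) by rewrite -{2}[k]mul1n eqn_mul2r eqn0Ngt k0.
  by case: eqP => _; case: j => [|j]; rewrite /= ?subn1 ?mul0r ?mul1r ?mulN1r ?oppr0.
rewrite (@eq_big_nat _ _ _ 1 (p * k) _ (fun b => if (p * k - b == k)%N then
    (if (0 < j)%N then -1 else 0) * nc_coef (harm (zquot b (St_zk_pow i)) (neg_zk_pow j.-1)) w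
  else 0)); last first.
  move=> b /andP[_ bp].
  rewrite (harm_eqr _ (zquot_neg_zk_pow j _)) ?nc_coef_harm_scaler; last by lia.
  by case: eqP => _ //; rewrite mul0r.
rewrite sum_subn_eq // (_ : (k < p * k)%N = (1 < p)%N); last by rewrite -{1}[k]mul1n ltn_mul2r k0.
case: ltnP => p1; last by rewrite !mul0r oppr0.
have -> : (p * k - k = p.-1 * k)%N by rewrite -{2}[k]mul1n -mulnBl subn1.
rewrite (harm_eql _ (zquot_St_zk_pow_mul i _)) ?nc_coef_harm_scalel; last by lia.
rewrite mul1r; case: j => [|j]; first by rewrite mul0r mulr0 oppr0.
by rewrite subn1 /= mulN1r; case: ifP; rewrite ?mul0r ?mulr0 ?oppr0 // mulrA.
Qed.

Lemma harm_pow_coef_ndvd a w i j : (0 < a)%N -> ~~ (k %| a)%N ->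
  harm_pow_coef (zw a ++ w) i j = 0.
Proof.
move=> a0 ka.
rewrite /harm_pow_coef nc_coef_harm_zw ?nc_h1_St_zk_pow ?nc_h1_neg_zk_pow //.
rewrite (harm_eql _ (zquot_St_zk_pow_ndvd i a0 ka)) nc_coef_harm0l add0r.
rewrite (harm_eqr _ (zquot_neg_zk_pow j a0)) nc_coef_harm_scaler.
rewrite (_ : a == k = false) ?mul0r ?add0r; last by apply: contraNF ka => /eqP->.
rewrite big1_seq // => b /andP[_]; rewrite mem_index_iota => /andP[b0 ba].
rewrite (harm_eqr _ (zquot_neg_zk_pow j _)) ?nc_coef_harm_scaler; last by lia.
case: eqP => [abk|]; last by rewrite mul0r.
rewrite (harm_eql _ (zquot_St_zk_pow_ndvd i _ _)) ?nc_coef_harm0l ?mulr0 //.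
by apply: contra ka => kb; rewrite -(subnK (ltnW ba)) abk dvdn_add.
Qed.

Definition lhs_ser : ser := ser_harm (ser_St (ser_geom zk_ser)) (ser_geom neg_zk_ser).

Lemma nc_coef_lhs_ser m w : nc_coef (lhs_ser m) w = antidiag m (harm_pow_coef w).
Proof. exact: nc_coef_ser_prod. Qed.

Lemma nc_h1_lhs_ser m : nc_h1 (lhs_ser m).
Proof.
apply: nc_h1_flatten; apply/allP => _ /mapP[i _ ->].
exact: nc_h1_harm (nc_h1_St_zk_pow i) (nc_h1_neg_zk_pow _).
Qed.

Lemma nc_coef_lhs_ser_nil m : nc_coef (lhs_ser m) [::] = (m == 0)%N%:R.
Proof.
rewrite nc_coef_lhs_ser (@eq_antidiag _ _ (fun i j => if i == 0%N then (j == 0)%N%:R else 0)).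
  by rewrite antidiag_pick subn0.
move=> i j; rewrite /harm_pow_coef nc_coef_harm_nil nc_coef_St_zk_pow nc_coef_ser_geom_nil;
  last exact: zletters_neg_zk_ser.
by case: i => [|i]; rewrite /= ?mul1r // zw_powS St_coef_nil_r ?zw_cat_nil ?mul0r.
Qed.

Lemma nc_coef_lhs_ser_zk m p w : (0 < p)%N ->
  nc_coef (lhs_ser m) (zw (p * k) ++ w) =
  if (2 <= p)%N && (p <= m)%N then 'X ^+ (p - 2) * ('X - 1) * nc_coef (lhs_ser (m - p)%N) w else 0.
Proof.
move=> p0; rewrite !nc_coef_lhs_ser (eq_antidiag _ (fun i j => harm_pow_coef_zk w i j p0)).
rewrite !antidiagB !antidiagZ antidiag_shiftl antidiag_shiftr.
rewrite (antidiag_shiftr 1 m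
  (fun i j => if (p.-1 <= i)%N then harm_pow_coef w (i - p.-1) j else 0)).
rewrite antidiag_shiftl -!nc_coef_lhs_ser.
have [->|p1] := eqVneq p 1%N; first by rewrite expr0 !mul1r !mul0r subr0 subrr.
have p2 : (1 < p)%N by lia.
rewrite p2 mul0r subr0 mul1r /=; case: (leqP p m) => pm; last first.
  rewrite mulr0 sub0r; case: ifP => m0; last by rewrite mulr0 oppr0.
  by rewrite ifF ?mulr0 ?oppr0 //; lia.
rewrite ifT; last by lia.
rewrite ifT; last by lia.
have -> : (m - 1 - p.-1 = m - p)%N by lia.
have -> : p.-2 = (p - 2)%N by lia.
have -> : p.-1 = (p - 2).+1 by lia.
by rewrite exprS -mulrBl; congr (_ * _); rewrite mulrBr mulr1 mulrC.
Qed.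

Lemma nc_coef_lhs_ser_zw m a w : (0 < a)%N -> nc_coef (lhs_ser m) (zw a ++ w) =
  antidiag m (fun i j => nc_coef (c_ser i) (zw a) * nc_coef (lhs_ser j) w).
Proof.
move=> a0; have [/dvdnP[p def_a] | ka] := boolP (k %| a)%N; last first.
  rewrite nc_coef_lhs_ser /antidiag big1 => [|i _]; last exact: harm_pow_coef_ndvd.
  rewrite big1 // => i _; rewrite nc_coef_c_ser // ifF ?mul0r //.
  by apply: contraNF ka => /andP[_ /eqP->]; apply: dvdn_mull.
have p0 : (0 < p)%N by move: a0; rewrite def_a muln_gt0 => /andP[].
rewrite def_a nc_coef_lhs_ser_zk // (@eq_antidiag _ _ (fun i j => if i == p then
    (if (2 <= p)%N then 'X ^+ (p - 2) * ('X - 1) else 0) * nc_coef (lhs_ser j) w else 0)).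
  by rewrite antidiag_pick; case: (1 < p)%N; case: (p <= m)%N; rewrite ?mul0r.
move=> i j; rewrite nc_coef_c_ser ?muln_gt0 ?p0 // eqn_mul2r eqn0Ngt k0 /= eq_sym.
by case: eqP => [->|_]; rewrite ?andbT ?andbF ?mul0r.
Qed.

End Proposition.

Theorem proposition4p8 (k : nat) (hk : (0 < k)%N) :
  ser_eq
    (ser_harm
       (ser_St (ser_geom (fun i => if i == 1%N then z k else nc_zero)))
       (ser_geom (fun i => if i == 1%N then nc_scale (-1) (z k) else nc_zero)))
    (ser_geom (fun i => if (2 <= i)%N
                        then nc_scale ('X ^+ (i - 2) * ('X - 1)) (z (i * k))
                        else nc_zero)).
Proof.
apply: (ser_geom_unique (C := c_ser k)) => //.
- exact: zletters_c_ser.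
- exact: nc_h1_lhs_ser.
- exact: nc_coef_lhs_ser_nil.
- exact: nc_coef_lhs_ser_zw.
Qed.
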